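(* In every $\mathsf{TLAE}$-frame, each of the relations $R_\Box$, $R_\blacksquare$, $R_{\mathsf{H}}$ and $R_{\mathsf{A}}$ is acyclic, i.e., for none of these relations $R$ is there a finite sequence $w_0,w_1,\dots,w_k$ with $k\geq 1$, $w_k=w_0$ and $Rw_{i}w_{i+1}$ for all $0\le i<k$.
   Context: Fix finite sets $\mathtt{Action}=\{\delta_1,\dots,\delta_n\}$ (atomic action types) and $\mathtt{Agent}=\{\alpha_1,\dots,\alpha_m\}$ (agents). The set $\mathtt{Action}^*$ of action types is generated by $\Delta::=\delta_j\mid\Delta\cup\Delta\mid\overline{\Delta}$. For each agent $\alpha_i$ and each $j$ there is a propositional constant $\mathfrak{d}^{\alpha_i}_j$ and for each agent $\alpha_i$ a propositional constant $\mathfrak{e}^{\alpha_i}$. An $\mathcal{L}$-frame is a tuple $\langle W,\{W_{\mathfrak{d}^{\alpha_i}_j}\}_{i,j},\{W_{\mathfrak{e}^{\alpha_i}}\}_{i},R_\Box,R_{\mathsf{A}},R_\blacksquare,R_{\mathsf{H}}\rangle$ where $W$ is a set of moments, each $W_{\mathfrak{d}^{\alpha_i}_j},W_{\mathfrak{e}^{\alpha_i}}\subseteq W$, and $R_\Box,R_{\mathsf{A}},R_\blacksquare,R_{\mathsf{H}}$ are binary relations on $W$. For action types define $W_{t(\delta_j^{\alpha_i})}=W_{\mathfrak{d}^{\alpha_i}_j}$, $W_{t(\overline{\Delta}^{\alpha_i})}=W\setminus W_{t(\Delta^{\alpha_i})}$, $W_{t(\Delta^{\alpha_i}\cup\Gamma^{\alpha_k})}=W_{t(\Delta^{\alpha_i})}\cup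 W_{t(\Gamma^{\alpha_k})}$. A $\mathsf{TLAE}$-frame is an $\mathcal{L}$-frame satisfying: (pA3) if $R_{\mathsf{A}}wu$ and $R_{\mathsf{A}}wv$ then $u=v$; (pA4) if $R_{\mathsf{A}}wu$ then $R_\Box wu$; (pA5) for every $w$, all pairwise distinct agents $\alpha_{1},\dots,\alpha_{k}$ and (not necessarily distinct) $\Delta_1,\dots,\Delta_k\in\mathtt{Action}^*$: if for each $i$ there is $u_i$ with $R_\Box wu_i$ and $u_i\in W_{t(\Delta_i^{\alpha_i})}$, then there is $v$ with $R_\Box wv$ and $v\in W_{t(\Delta_1^{\alpha_1})}\cap\dots\cap W_{t(\Delta_k^{\alpha_k})}$; (pA6) for every $w$ and agent $\alpha_i$: if some $v$ with $R_\Box wv$ lies in $W_{\mathfrak{e}^{\alpha_i}}$, then some $u$ with $R_\Box wu$ lies outside $W_{\mathfrak{e}^{\alpha_i}}$; (pA10;A11) $R_\Box wv$ iff $R_\blacksquare vw$; (pA12) if $R_\blacksquare wu$ and $R_\blacksquare wv$ then $u=v$; (pA9;A14) $R_{\mathsf{H}}$ is the transitive closure of $R_\blacksquare$; (pA13) for every $w$, either there is no $v$ with $R_{\mathsf{H}}wv$, or there is $u$ with $R_{\mathsf{H}}wu$ such that there is no $z$ with $R_{\mathsf{H}}uz$. *)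

From mathcomp Require Import all_boot.
From Stdlib Require Import Relations.
Unset Implicit Arguments.

Inductive actType (Action : Type) : Type :=
| AAtom : Action -> actType Action
| AUnion : actType Action -> actType Action -> actType Action
| ACompl : actType Action -> actType Action.

Record Lframe (Agent Action : Type) := {
  W : Type;
  Wd : Agent -> Action -> W -> Prop;
  We : Agent -> W -> Prop;
  RBox : W -> W -> Prop;
  RA : W -> W -> Prop;
  RBl : W -> W -> Prop;
  RH : W -> W -> Prop
}.
Arguments W {Agent Action} _.
Arguments Wd {Agent Action} _ _ _ _.
Arguments We {Agent Action} _ _ _.
Arguments RBox {Agent Action} _ _ _.
Arguments RA {Agent Action} _ _ _.
Arguments RBl {Agent Action} _ _ _.
Arguments RH {Agent Action} _ _ _.
Arguments AAtom {Action} _.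
Arguments AUnion {Action} _ _.
Arguments ACompl {Action} _.

Fixpoint Wt (Agent Action : Type) (F : Lframe Agent Action) (a : Agent)
    (D : actType Action) : W F -> Prop :=
  match D with
  | AAtom j => Wd F a j
  | AUnion D1 D2 => fun w => Wt Agent Action F a D1 w \/ Wt Agent Action F a D2 w
  | ACompl D1 => fun w => ~ Wt Agent Action F a D1 w
  end.
Arguments Wt {Agent Action} F a D.

Definition TLAE {Agent Action : finType} (F : Lframe Agent Action) : Prop :=
  (forall w u v, RA F w u -> RA F w v -> u = v) /\
  (forall w u, RA F w u -> RBox F w u) /\
  (forall (w : W F) (k : nat) (ag : 'I_k -> Agent) (D : 'I_k -> actType Action),
      0 < k -> injective ag ->
      (forall i, exists u, RBox F w u /\ Wt F (ag i) (D i) u) ->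
      exists v, RBox F w v /\ forall i, Wt F (ag i) (D i) v) /\
  (forall (w : W F) (a : Agent),
      (exists v, RBox F w v /\ We F a v) ->
      exists u, RBox F w u /\ ~ We F a u) /\
  (forall w v, RBox F w v <-> RBl F v w) /\
  (forall w u v, RBl F w u -> RBl F w v -> u = v) /\
  (forall w v, RH F w v <-> clos_trans _ (RBl F) w v) /\
  (forall w, (forall v, ~ RH F w v) \/
             exists u, RH F w u /\ forall z, ~ RH F u z).

Definition acyclic {T : Type} (R : T -> T -> Prop) : Prop :=
  forall (k : nat) (w : nat -> T),
    0 < k -> w k = w 0 -> (forall i, i < k -> R (w i) (w i.+1)) -> False.

From mathcomp Require Import all_boot.
From Stdlib Require Import Relations.

Set Implicit Arguments.
Unset Strict Implicit.

(* Past moments are unique (pA12), so the transitive closure of the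
   R_blacksquare relation is the orbit of a partial function: once a moment
   lies on a cycle, everything in its past lies on that same cycle and has a
   further past.  This contradicts the existence of a maximal past element
   (pA13).  R_Box is the converse of R_blacksquare, R_H its transitive closure
   and R_A is contained in R_Box, so all four relations inherit acyclicity. *)

Section TransitiveClosure.

Variable T : Type.
Implicit Types R S : relation T.

Lemma clos_trans_mono R S x y :
  inclusion T R S -> clos_trans T R x y -> clos_trans T S x y.
Proof.
move=> RS; elim=> [u v /RS|u v z _ IHuv _ IHvz]; first exact: t_step.
exact: t_trans IHuv IHvz.
Qed.

Lemma clos_trans_idem R x y :
  clos_trans T (clos_trans T R) x y -> clos_trans T R x y.
Proof. by elim=> // u v z _ IHuv _ IHvz; apply: t_trans IHuv IHvz. Qed.

Lemma clos_trans_path R (w : nat -> T) n :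
  0 < n -> (forall i, i < n -> R (w i) (w i.+1)) -> clos_trans T R (w 0) (w n).
Proof.
elim: n => [//|[|n] IHn] _ Rw; first exact/t_step/Rw.
apply: t_trans (IHn isT (fun i lt_in => Rw i (ltnW lt_in))) _.
exact/t_step/Rw.
Qed.

Lemma acyclic_clos_trans_irrefl R :
  (forall x, ~ clos_trans T R x x) -> acyclic R.
Proof.
by move=> irrR k w k_gt0 wk Rw; apply: (irrR (w 0)); rewrite -{2}wk;
  apply: clos_trans_path.
Qed.

Lemma acyclic_sub R S : inclusion T R S -> acyclic S -> acyclic R.
Proof. by move=> RS acS k w k_gt0 wk Rw; apply: (acS k w) => // i /Rw /RS. Qed.

Definition functional_rel R := forall x y z, R x y -> R x z -> y = z.

Variable R : relation T.
Hypothesis R_functional : functional_rel R.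

Lemma clos_trans_functional_step w u z :
  clos_trans T R w w -> clos_trans T R u w -> R u z -> clos_trans T R z w.
Proof.
move=> Rww Ruw Ruz.
case: (clos_trans_t1n _ _ _ _ Ruw) Rww Ruz => [y Ruy|y w' Ruy Ryw'] Rw'w' Ruz;
  rewrite (R_functional Ruz Ruy) //.
exact: clos_t1n_trans.
Qed.

Lemma clos_trans_functional_cycle w u :
  clos_trans T R w w -> clos_trans T R w u -> clos_trans T R u w.
Proof.
move=> Rww Rwu; elim: (clos_trans_tn1 _ _ _ _ Rwu) => [y Rwy|y z Ryz _ IHy].
  exact: (clos_trans_functional_step Rww Rww Rwy).
exact: (clos_trans_functional_step Rww IHy Ryz).
Qed.

Lemma clos_trans_functional_irrefl :
  (forall w, (forall v, ~ clos_trans T R w v) \/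
             exists2 u, clos_trans T R w u & forall z, ~ clos_trans T R u z) ->
  forall w, ~ clos_trans T R w w.
Proof.
move=> endpoint w Rww; case: (endpoint w) => [/(_ w)//|[u Rwu uend]].
exact/(uend w)/(clos_trans_functional_cycle Rww).
Qed.

End TransitiveClosure.

Theorem mainTheorem2 (Agent Action : finType) (F : Lframe Agent Action) :
  TLAE F ->
  acyclic (RBox F) /\ acyclic (RBl F) /\ acyclic (RH F) /\ acyclic (RA F).
Proof.
case=> _ [RA_Box [_ [_ [Box_Bl [Bl_functional [RH_tc endpoint]]]]]].
have Bl_irrefl : forall w, ~ clos_trans _ (RBl F) w w.
  apply: clos_trans_functional_irrefl => // w.
  case: (endpoint w) => [noH|[u [/RH_tc Rwu uend]]]; [left|right].
    by move=> v /RH_tc /noH.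
  by exists u => // z /RH_tc /uend.
have Box_tc_Bl x y : clos_trans _ (RBox F) x y -> clos_trans _ (RBl F) y x.
  move=> Box_xy; apply/clos_trans_transp_permute.
  by apply: clos_trans_mono Box_xy => u v /Box_Bl.
have RH_tc_Bl x y : clos_trans _ (RH F) x y -> clos_trans _ (RBl F) x y.
  by move=> RH_xy; apply/clos_trans_idem/(clos_trans_mono _ RH_xy) => u v /RH_tc.
have Box_acyclic : acyclic (RBox F).
  by apply: acyclic_clos_trans_irrefl => w /Box_tc_Bl; apply: Bl_irrefl.
split=> //; split; first exact: acyclic_clos_trans_irrefl.
split; last exact: acyclic_sub Box_acyclic.
by apply: acyclic_clos_trans_irrefl => w /RH_tc_Bl; apply: Bl_irrefl.
Qed.
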